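(* For every infinite computable set $R\subseteq\mathbb N$, the sequence $\Omega_R$ is captured by a $\mathbf c_{\Omega,R}$-bounded test.
   Context: $\Omega$ is a fixed left-c.e. ML-random real, viewed also as an infinite binary sequence, with a computable increasing sequence of rationals $\Omega_s\to\Omega$ (here $\Omega_s$ for a number $s$ denotes the approximation). For an infinite set $R$, $\Omega_R$ is the sequence obtained from $\Omega$ by deleting the bits at positions outside $R$ (its $m$-th bit is $\Omega(p_R(m))$, $p_R(m)$ the $m$-th element of $R$). Let $k_s(n)=\lfloor-\log_2(\Omega_s-\Omega_n)\rfloor$ and $k(n)=\lfloor-\log_2(\Omega-\Omega_n)\rfloor$. Define $\mathbf c_{\Omega,R}(n,s)=2^{-|R\cap k_s(n)|}$ (where $R\cap m=R\cap\{0,\dots,m-1\}$), a monotonic cost function with limit $\underline{\mathbf c}_{\Omega,R}(n)=2^{-|R\cap k(n)|}$. A $\mathbf c$-bounded test is a nested sequence of uniformly c.e. open sets $V_n\subseteq 2^\omega$ with $\mu(V_n)\le C\,\underline{\mathbf c}(n)$ for some constant $C$; it captures the elements of $\bigcap_nV_n$. *)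

From Stdlib Require Import Reals List ZArith Arith ClassicalEpsilon.
Import ListNotations.
Open Scope R_scope.

Inductive prog : Type :=
| PZero : prog
| PSucc : prog
| PProj : nat -> prog
| PComp : prog -> list prog -> prog
| PPrec : prog -> prog -> prog
| PMu : prog -> prog.

Inductive eval : prog -> list nat -> nat -> Prop :=
| eZero v : eval PZero v 0
| eSucc x v : eval PSucc (x :: v) (S x)
| eProj i v : (i < length v)%nat -> eval (PProj i) v (nth i v 0%nat)
| eComp f gs v ys y : evals gs v ys -> eval f ys y -> eval (PComp f gs) v y
| ePrec0 f g v y : eval f v y -> eval (PPrec f g) (0%nat :: v) y
| ePrecS f g n v r y :
    eval (PPrec f g) (n :: v) r -> eval g (n :: r :: v) y ->
    eval (PPrec f g) (S n :: v) y
| eMu f v n :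
    eval f (n :: v) 0%nat ->
    (forall m, (m < n)%nat -> exists k, eval f (m :: v) (S k)) ->
    eval (PMu f) v n
with evals : list prog -> list nat -> list nat -> Prop :=
| esNil v : evals [] v []
| esCons g gs v y ys : eval g v y -> evals gs v ys -> evals (g :: gs) v (y :: ys).

Definition computable1 (f : nat -> nat) : Prop :=
  exists p, forall n, eval p [n] (f n).
Definition computable2 (f : nat -> nat -> nat) : Prop :=
  exists p, forall n m, eval p [n; m] (f n m).

Definition computable_set (Rs : nat -> bool) : Prop :=
  computable1 (fun n => if Rs n then 1%nat else 0%nat).

Definition infinite_set (Rs : nat -> bool) : Prop :=
  forall m, exists k, (m <= k)%nat /\ Rs k = true.

Fixpoint pos_bits (p : positive) : list bool :=
  match p with
  | xH => []
  | xO p' => pos_bits p' ++ [false]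
  | xI p' => pos_bits p' ++ [true]
  end.

(** code 0 = no string; code (m+1) = the m-th binary string (bijectively). *)
Definition decode_str (c : nat) : option (list bool) :=
  match c with
  | O => None
  | S m => Some (pos_bits (Pos.of_succ_nat m))
  end.

Definition in_cyl (sigma : list bool) (X : nat -> bool) : Prop :=
  forall i, (i < length sigma)%nat -> X i = nth i sigma false.

(** A sequence of uniformly c.e. open sets is presented by a computable
    g : nat -> nat -> nat; V_n is the union of the cylinders of the strings
    decode_str (g n k), k in nat. *)
Definition in_V (g : nat -> nat -> nat) (n : nat) (X : nat -> bool) : Prop :=
  exists k, match decode_str (g n k) with
            | Some s => in_cyl s X
            | None => False
            end.

Fixpoint stage (g : nat -> nat -> nat) (n k : nat) : list (list bool) :=
  match k with
  | O => []
  | S k' => match decode_str (g n k') with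
            | Some s => s :: stage g n k'
            | None => stage g n k'
            end
  end.

Fixpoint prefixb (s t : list bool) : bool :=
  match s, t with
  | [], _ => true
  | a :: s', b :: t' => Bool.eqb a b && prefixb s' t'
  | _ :: _, [] => false
  end.

Fixpoint all_strings (L : nat) : list (list bool) :=
  match L with
  | O => [[]]
  | S L' => flat_map (fun s => [false :: s; true :: s]) (all_strings L')
  end.

(** Lebesgue measure of the finite union of cylinders [s], s in S *)
Definition measure_fin (S : list (list bool)) : R :=
  let L := fold_right (fun s m => Nat.max (length s) m) 0%nat S in
  INR (length (filter (fun t => existsb (fun s => prefixb s t) S) (all_strings L)))
  / 2 ^ L.

(** mu(V_n) <= b  (measure of an open set = sup of the measures of its
    finite stages) *)
Definition measure_V_le (g : nat -> nat -> nat) (n : nat) (b : R) : Prop :=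
  forall k, measure_fin (stage g n k) <= b.

Definition uniformly_ce (g : nat -> nat -> nat) : Prop := computable2 g.

Definition nested (g : nat -> nat -> nat) : Prop :=
  forall n X, in_V g (S n) X -> in_V g n X.

Definition ML_test (g : nat -> nat -> nat) : Prop :=
  uniformly_ce g /\ forall n, measure_V_le g n (/ 2 ^ n).

Definition ML_random (X : nat -> bool) : Prop :=
  forall g, ML_test g -> ~ (forall n, in_V g n X).

Definition real_of_bits (X : nat -> bool) (r : R) : Prop :=
  infinite_sum (fun i => if X i then / 2 ^ (S i) else 0) r.

Definition computable_rat_seq (q : nat -> R) : Prop :=
  exists a b c : nat -> nat,
    computable1 a /\ computable1 b /\ computable1 c /\
    forall s, q s = (INR (a s) - INR (b s)) / INR (S (c s)).

Fixpoint cnt (Rs : nat -> bool) (k : nat) : nat :=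
  match k with
  | O => O
  | S k' => (cnt Rs k' + if Rs k' then 1 else 0)%nat
  end.

Definition kfun (r : R) (q : nat -> R) (n : nat) : Z :=
  Int_part (- (ln (r - q n) / ln 2)).

(** underline c_{Omega,R}(n) = 2^{-|R ∩ k(n)|}  (R ∩ m = R ∩ {0..m-1},
    empty when m <= 0) *)
Definition cbar (Rs : nat -> bool) (r : R) (q : nat -> R) (n : nat) : R :=
  / 2 ^ (cnt Rs (Z.to_nat (kfun r q n))).

Definition bounded_test (cb : nat -> R) (g : nat -> nat -> nat) : Prop :=
  uniformly_ce g /\ nested g /\
  exists C : R, forall n, measure_V_le g n (C * cb n).

Definition captures (g : nat -> nat -> nat) (X : nat -> bool) : Prop :=
  forall n, in_V g n X.

(** p_R(m) = the m-th element of R (counting from 0) *)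
Definition p_R (Rs : nat -> bool) (m : nat) : nat :=
  epsilon (inhabits 0%nat) (fun k => Rs k = true /\ cnt Rs k = m).

Definition restrict_seq (Rs : nat -> bool) (X : nat -> bool) : nat -> bool :=
  fun m => X (p_R Rs m).

(* Let [V_n] be generated by the cylinders of [Ω_(q s) ↾ (R ∩ k_s(n))] for
   [s > n] with [q s > q n], where [Ω_(q s)] is the binary expansion of [q s] and
   [k_s(n) = ⌊-log₂ (q s - q n)⌋] is computed exactly from the rationals.
   Since [k_s(n) <= k_s(n+1)], the string for [n] is a prefix of the one for [n+1].
   Since [q s - q n <= 2^-k_s(n)], the strings of [V_n] of each length [m] are at
   most two, so [μ(V_n) <= Σ_(m >= |R ∩ k(n)|) 2 · 2^-m = 4 c(n)].  As [s → ∞],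
   [k_s(n)] reaches [k(n)] and, [Ω] not being a dyadic rational (it is ML-random),
   [q s] eventually agrees with [Ω] on the first [k(n)] bits, so [Ω_R ∈ V_n].
   When [q s = Ω] for some [s] the cost function is bounded below and the trivial
   test works. *)

From Stdlib Require Import Reals List ZArith Arith Lia Lra ClassicalEpsilon Wf_nat.
Import ListNotations.
Open Scope nat_scope.

Inductive expr : Type :=
| EVar (i : nat)
| EZero
| ESucc (a : expr)
| EExt (p : prog) (f : nat -> nat) (Hf : forall n, eval p [n] (f n)) (a : expr)
| EApp1 (f a : expr)
| EApp2 (f a b : expr)
| ERec (n b s : expr).

(* [ERec n b s] iterates [s] [n] times from [b]; the step [s] sees the
   iteration index, then the accumulator, then the outer arguments. *)
Fixpoint expr_val (e : expr) (v : list nat) : nat :=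
  match e with
  | EVar i => nth i v 0
  | EZero => 0
  | ESucc a => S (expr_val a v)
  | EExt _ f _ a => f (expr_val a v)
  | EApp1 f a => expr_val f [expr_val a v]
  | EApp2 f a b => expr_val f [expr_val a v; expr_val b v]
  | ERec n b s =>
      nat_rec (fun _ => nat) (expr_val b v)
        (fun i acc => expr_val s (i :: acc :: v)) (expr_val n v)
  end.

Fixpoint expr_wf (k : nat) (e : expr) : bool :=
  match e with
  | EVar i => i <? k
  | EZero => true
  | ESucc a | EExt _ _ _ a => expr_wf k a
  | EApp1 f a => expr_wf 1 f && expr_wf k a
  | EApp2 f a b => expr_wf 2 f && expr_wf k a && expr_wf k b
  | ERec n b s => expr_wf k n && expr_wf k b && expr_wf (S (S k)) s
  end.

Fixpoint compile (k : nat) (e : expr) : prog :=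
  match e with
  | EVar i => PProj i
  | EZero => PZero
  | ESucc a => PComp PSucc [compile k a]
  | EExt p _ _ a => PComp p [compile k a]
  | EApp1 f a => PComp (compile 1 f) [compile k a]
  | EApp2 f a b => PComp (compile 2 f) [compile k a; compile k b]
  | ERec n b s => PComp (PPrec (compile k b) (compile (S (S k)) s))
                        (compile k n :: map PProj (seq 0 k))
  end.

Lemma evals_projections v w j :
  (forall i, i < length w -> nth (j + i) v 0 = nth i w 0) ->
  j + length w <= length v ->
  evals (map PProj (seq j (length w))) v w.
Proof.
  revert j; induction w as [|x w IH]; intros j Hnth Hlen; simpl; constructor.
  - specialize (Hnth 0 ltac:(simpl; lia)); rewrite Nat.add_0_r in Hnth.
    simpl in Hnth. rewrite <- Hnth. constructor. simpl in Hlen. lia.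
  - apply IH; simpl in *; [|lia].
    intros i Hi. rewrite <- (Hnth (S i)) by lia. f_equal. lia.
Qed.

Lemma evals_id v : evals (map PProj (seq 0 (length v))) v v.
Proof. apply evals_projections; auto. Qed.

Lemma compile_eval e k v :
  expr_wf k e = true -> length v = k -> eval (compile k e) v (expr_val e v).
Proof.
  revert k v; induction e; intros k v Hwf Hlen; simpl in *;
    repeat match goal with H : (_ && _)%bool = true |- _ =>
             apply Bool.andb_true_iff in H as [? ?] end.
  - constructor. apply Nat.ltb_lt in Hwf. lia.
  - constructor.
  - econstructor; [repeat constructor; auto | constructor].
  - econstructor; [repeat constructor; auto | auto].
  - econstructor; [repeat constructor; auto | auto].
  - econstructor; [repeat constructor; auto | auto].
  - subst k. econstructor; [constructor; [auto | apply evals_id] |].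
    induction (expr_val e1 v); simpl; econstructor; eauto.
Qed.

Lemma expr_computable2 e :
  expr_wf 2 e = true -> computable2 (fun n m => expr_val e [n; m]).
Proof. intros Hwf. exists (compile 2 e). intros n m. now apply compile_eval. Qed.

Lemma ERec_val_ind (P : nat -> nat -> Prop) n b s v :
  P 0 (expr_val b v) ->
  (forall i acc, P i acc -> P (S i) (expr_val s (i :: acc :: v))) ->
  P (expr_val n v) (expr_val (ERec n b s) v).
Proof. intros H0 HS; simpl; induction (expr_val n v); simpl; auto. Qed.

Definition ADD := ERec (EVar 1) (EVar 0) (ESucc (EVar 1)).
Definition PRED := ERec (EVar 0) EZero (EVar 0).
Definition SUB := ERec (EVar 1) (EVar 0) (EApp1 PRED (EVar 1)).
Definition MUL := ERec (EVar 1) EZero (EApp2 ADD (EVar 1) (EVar 2)).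
Definition POW2 := ERec (EVar 0) (ESucc EZero) (EApp2 ADD (EVar 1) (EVar 1)).
Definition LE := EApp2 SUB (ESucc EZero) (EApp2 SUB (EVar 0) (EVar 1)).
Definition ODD := ERec (EVar 0) EZero (EApp2 SUB (ESucc EZero) (EVar 1)).
Definition DIV := ERec (EVar 0) EZero
  (EApp2 ADD (EVar 1) (EApp2 LE (EApp2 MUL (ESucc (EVar 0)) (EVar 3)) (EVar 2))).

Lemma ADD_val x y : expr_val ADD [x; y] = x + y.
Proof. apply (ERec_val_ind (fun i acc => acc = x + i)); simpl; lia. Qed.

Lemma PRED_val x : expr_val PRED [x] = Nat.pred x.
Proof. now destruct x. Qed.

Lemma SUB_val x y : expr_val SUB [x; y] = x - y.
Proof.
  apply (ERec_val_ind (fun i acc => acc = x - i)); [simpl; lia|].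
  intros i acc ->. cbn -[PRED]. rewrite PRED_val. lia.
Qed.

Lemma MUL_val x y : expr_val MUL [x; y] = x * y.
Proof.
  apply (ERec_val_ind (fun i acc => acc = x * i)); [simpl; lia|].
  intros i acc ->. cbn -[ADD]. rewrite ADD_val. lia.
Qed.

Lemma POW2_val x : expr_val POW2 [x] = 2 ^ x.
Proof.
  apply (ERec_val_ind (fun i acc => acc = 2 ^ i)); [reflexivity|].
  intros i acc ->. cbn -[ADD Nat.pow]. rewrite ADD_val, Nat.pow_succ_r'. lia.
Qed.

Lemma LE_val x y : expr_val LE [x; y] = if x <=? y then 1 else 0.
Proof.
  cbn -[SUB]. rewrite !SUB_val. destruct (Nat.leb_spec x y); lia.
Qed.

Lemma ODD_val x : expr_val ODD [x] = if Nat.odd x then 1 else 0.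
Proof.
  apply (ERec_val_ind (fun i acc => acc = if Nat.odd i then 1 else 0)); [reflexivity|].
  intros i acc ->. cbn -[SUB Nat.odd]. rewrite SUB_val, Nat.odd_succ, <- Nat.negb_odd.
  now destruct (Nat.odd i).
Qed.

Lemma DIV_val x y : 0 < y -> expr_val DIV [x; y] = x / y.
Proof.
  intros Hy.
  assert (Hdiv : x / y <= x) by (apply Nat.Div0.div_le_upper_bound; nia).
  rewrite <- (Nat.min_r x (x / y)) at 1 by exact Hdiv.
  apply (ERec_val_ind (fun i acc => acc = Nat.min i (x / y))); [reflexivity|].
  intros i acc ->. cbn -[ADD LE MUL Nat.min]. rewrite ADD_val, LE_val, MUL_val.
  destruct (Nat.leb_spec (S i * y) x) as [Hle|Hgt].
  - enough (S i <= x / y) by lia. apply Nat.div_le_lower_bound; nia.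
  - enough (x / y <= i) by lia.
    apply Nat.lt_succ_r, Nat.Div0.div_lt_upper_bound; nia.
Qed.

Lemma pow2_le_iff_le_log2 a k : 2 ^ S k <= a <-> S k <= Nat.log2 a.
Proof.
  destruct a as [|a].
  - rewrite Nat.log2_nonpos by lia. pose proof (Nat.pow_nonzero 2 (S k)). lia.
  - apply Nat.log2_le_pow2. lia.
Qed.

Lemma log2_div_spec P Q : 0 < P ->
  (Nat.log2 (Q / P) = 0 \/ P * 2 ^ Nat.log2 (Q / P) <= Q) /\
  Q < P * 2 ^ S (Nat.log2 (Q / P)).
Proof.
  intros HP. destruct (Nat.eq_dec (Q / P) 0) as [H0|H0].
  - rewrite H0, Nat.log2_nonpos by lia. split; [now left|].
    apply Nat.div_small_iff in H0; simpl; lia.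
  - destruct (Nat.log2_spec (Q / P)) as [Hlo Hhi]; [lia|].
    set (L := Nat.log2 (Q / P)) in *. split; [right|].
    + transitivity (P * (Q / P)); [nia|apply Nat.Div0.mul_div_le].
    + apply Nat.lt_le_trans with (P * S (Q / P)); [apply Nat.mul_succ_div_gt; lia|nia].
Qed.

(* [KC] finds [Nat.log2 (Q / P)] by counting the [k < Q] with [P * 2 ^ (k + 1) <= Q]. *)
Definition KC := ERec (EVar 1) EZero (EApp2 ADD (EVar 1)
  (EApp2 LE (EApp2 MUL (EVar 2) (EApp1 POW2 (ESucc (EVar 1)))) (EVar 3))).

Lemma KC_val P Q : 0 < P -> expr_val KC [P; Q] = Nat.log2 (Q / P).
Proof.
  intros HP.
  assert (HL : Nat.log2 (Q / P) <= Q).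
  { transitivity (Q / P); [|apply Nat.Div0.div_le_upper_bound; nia].
    destruct (Nat.eq_dec (Q / P) 0) as [->|H0]; [reflexivity|].
    apply Nat.lt_le_incl, Nat.log2_lt_lin. lia. }
  set (L := Nat.log2 (Q / P)) in *.
  rewrite <- (Nat.min_r Q L) by exact HL.
  apply (ERec_val_ind (fun i acc => acc = Nat.min i L)); [reflexivity|].
  intros i acc ->. cbn -[ADD LE MUL POW2 Nat.min Nat.pow].
  rewrite ADD_val, LE_val, MUL_val, POW2_val.
  assert (Hstep : P * 2 ^ S (Nat.min i L) <= Q <-> S (Nat.min i L) <= L).
  { unfold L. rewrite <- pow2_le_iff_le_log2, Nat.mul_comm. split; intros H.
    - apply Nat.div_le_lower_bound; lia.
    - transitivity (P * (Q / P)); [nia|apply Nat.Div0.mul_div_le]. }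
  destruct (Nat.leb_spec (P * 2 ^ S (Nat.min i L)) Q) as [H|H].
  - apply Hstep in H. lia.
  - assert (~ S (Nat.min i L) <= L) by (rewrite <- Hstep; lia). lia.
Qed.

Definition enc (l : list bool) : nat := fold_left (fun c b => 2 * c + Nat.b2n b) l 1.

Lemma enc_snoc l b : enc (l ++ [b]) = 2 * enc l + Nat.b2n b.
Proof. unfold enc. now rewrite fold_left_app. Qed.

Lemma decode_enc l : decode_str (enc l) = Some l.
Proof.
  set (encp := fun l : list bool =>
    fold_left (fun p (b : bool) => if b then xI p else xO p) l xH).
  assert (Hencp : pos_bits (encp l) = l /\ Pos.to_nat (encp l) = enc l).
  { induction l as [|b l IH] using rev_ind; [auto|].
    unfold encp in *. rewrite fold_left_app, enc_snoc. destruct IH as [H1 H2].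
    destruct b; simpl; rewrite H1; split; auto;
      [rewrite Pos2Nat.inj_xI | rewrite Pos2Nat.inj_xO]; lia. }
  destruct Hencp as [Hbits Hval].
  destruct (enc l) as [|m]; [pose proof (Pos2Nat.is_pos (encp l)); lia|].
  simpl. rewrite (SuccNat2Pos.inv m (encp l)); congruence.
Qed.

Fixpoint prefix_num (X : nat -> bool) (K : nat) : nat :=
  match K with
  | 0 => 0
  | S K' => 2 * prefix_num X K' + Nat.b2n (X K')
  end.

Section RestrictedBits.
Variable Rs : nat -> bool.

(* The bits at positions in [R] of the [K]-digit binary numeral of [N], most
   significant digit at position [0]. *)
Fixpoint rbits (K N : nat) : list bool :=
  match K with
  | 0 => []
  | S K' => rbits K' (N / 2) ++ (if Rs K' then [Nat.odd N] else [])
  end.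

Lemma cnt_mono k k' : k <= k' -> cnt Rs k <= cnt Rs k'.
Proof. induction 1; simpl; lia. Qed.

Lemma cnt_lt k k' : Rs k = true -> k < k' -> cnt Rs k < cnt Rs k'.
Proof.
  intros Hk Hlt. apply Nat.lt_le_trans with (cnt Rs (S k)).
  - simpl. rewrite Hk. lia.
  - now apply cnt_mono.
Qed.

Lemma p_R_cnt k : Rs k = true -> p_R Rs (cnt Rs k) = k.
Proof.
  intros Hk. unfold p_R.
  destruct (epsilon_spec (inhabits 0) (fun j => Rs j = true /\ cnt Rs j = cnt Rs k)
     (ex_intro _ k (conj Hk eq_refl))) as [Hj Hcnt].
  set (j := epsilon _ _) in *.
  destruct (Nat.lt_total j k) as [H|[H|H]]; auto;
    [pose proof (cnt_lt _ _ Hj H) | pose proof (cnt_lt _ _ Hk H)]; lia.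
Qed.

Lemma rbits_length K N : length (rbits K N) = cnt Rs K.
Proof.
  revert N; induction K; intros N; simpl; [reflexivity|].
  rewrite length_app, IHK. destruct (Rs K); simpl; lia.
Qed.

Lemma rbits_add K t N : exists rest, rbits (K + t) N = rbits K (N / 2 ^ t) ++ rest.
Proof.
  revert N; induction t; intros N.
  - exists []. now rewrite Nat.add_0_r, app_nil_r, Nat.pow_0_r, Nat.div_1_r.
  - rewrite Nat.add_succ_r. cbn [rbits]. destruct (IHt (N / 2)) as [rest ->].
    rewrite Nat.Div0.div_div. eexists. rewrite <- app_assoc. reflexivity.
Qed.

Lemma rbits_add_cnt K t N :
  cnt Rs (K + t) = cnt Rs K -> rbits (K + t) N = rbits K (N / 2 ^ t).
Proof.
  intros Hcnt. destruct (rbits_add K t N) as [[|x rest] E]; rewrite E.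
  - apply app_nil_r.
  - apply (f_equal (@length bool)) in E. rewrite length_app, !rbits_length in E.
    simpl in E. lia.
Qed.

Lemma rbits_prefix_num (X : nat -> bool) K i :
  i < length (rbits K (prefix_num X K)) ->
  nth i (rbits K (prefix_num X K)) false = X (p_R Rs i).
Proof.
  revert i; induction K; intros i Hi; [simpl in Hi; lia|].
  cbn [rbits prefix_num] in *.
  rewrite Nat.add_comm, Nat.add_b2n_double_div2 in *.
  rewrite Nat.odd_add_mul_2. replace (Nat.odd (Nat.b2n (X K))) with (X K)
    by now destruct (X K).
  rewrite length_app in Hi.
  destruct (Nat.lt_ge_cases i (length (rbits K (prefix_num X K)))).
  - rewrite app_nth1 by assumption. now apply IHK.
  - destruct (Rs K) eqn:HR; simpl in Hi; [|lia].
    replace i with (length (rbits K (prefix_num X K))) by lia.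
    rewrite nth_middle, rbits_length. now rewrite p_R_cnt.
Qed.

Lemma cnt_ivt K m : m <= cnt Rs K -> exists J, cnt Rs J = m.
Proof.
  induction K as [|K IH]; intros Hm; [exists 0; simpl in *; lia|].
  destruct (Nat.eq_dec m (cnt Rs (S K))) as [->|Hne]; [eauto|].
  apply IH. simpl in Hm, Hne. destruct (Rs K); lia.
Qed.

Lemma cnt_surj : infinite_set Rs -> forall m, exists J, cnt Rs J = m.
Proof.
  intros Hinf m. induction m as [|m [J HJ]]; [now exists 0|].
  destruct (Hinf J) as [k [HJk Hk]]. apply (cnt_ivt (S k)).
  pose proof (cnt_mono _ _ HJk). simpl. rewrite Hk. lia.
Qed.

Definition first_cnt (m : nat) : nat :=
  epsilon (inhabits 0) (fun J => cnt Rs J = m /\ forall J', cnt Rs J' = m -> J <= J').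

Lemma first_cnt_spec : infinite_set Rs -> forall m,
  cnt Rs (first_cnt m) = m /\ forall J, cnt Rs J = m -> first_cnt m <= J.
Proof.
  intros Hinf m. unfold first_cnt. apply epsilon_spec.
  destruct (dec_inh_nat_subset_has_unique_least_element (fun J => cnt Rs J = m))
    as [J [HJ _]]; [intros J; destruct (Nat.eq_dec (cnt Rs J) m); auto | now apply cnt_surj |].
  now exists J.
Qed.

Section Computable.
Variables (pr : prog) (Hr : forall n, eval pr [n] (if Rs n then 1 else 0)).

(* The step doubles the accumulator and appends the next bit of [N] when the
   position is in [R] (the multiplier [Rs j] is [0] or [1]). *)
Definition RBITS := ERec (EVar 0) (ESucc EZero)
  (EApp2 ADD (EVar 1) (EApp2 MUL (EExt pr _ Hr (EVar 0))
     (EApp2 ADD (EVar 1) (EApp1 ODD (EApp2 DIV (EVar 3)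
        (EApp1 POW2 (EApp2 SUB (EVar 2) (ESucc (EVar 0))))))))).

Lemma RBITS_val K N : expr_val RBITS [K; N] = enc (rbits K N).
Proof.
  enough (H : K <= K -> expr_val RBITS [K; N] = enc (rbits K (N / 2 ^ (K - K))))
    by now rewrite Nat.sub_diag, Nat.pow_0_r, Nat.div_1_r in H; auto.
  unfold RBITS. refine (ERec_val_ind
    (fun j acc => j <= K -> acc = enc (rbits j (N / 2 ^ (K - j)))) (EVar 0) _ _ [K; N] _ _);
    [reflexivity|].
  intros j acc IH Hj. rewrite IH by lia. clear IH.
  cbn -[ADD MUL ODD DIV POW2 SUB rbits].
  rewrite ADD_val, MUL_val, ADD_val, ODD_val, DIV_val, POW2_val, SUB_val
    by (rewrite POW2_val; apply Nat.neq_0_lt_0, Nat.pow_nonzero; lia).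
  cbn [rbits]. rewrite Nat.Div0.div_div.
  replace (2 ^ (K - S j) * 2) with (2 ^ (K - j))
    by (replace (K - j) with (S (K - S j)) by lia; simpl; lia).
  destruct (Rs j).
  - rewrite enc_snoc. destruct (Nat.odd _); simpl; lia.
  - rewrite app_nil_r. lia.
Qed.

End Computable.

End RestrictedBits.

Lemma In_stage g n k s : In s (stage g n k) -> exists j, decode_str (g n j) = Some s.
Proof.
  induction k as [|k IH]; simpl; [tauto|].
  destruct (decode_str (g n k)) eqn:E; [intros [<-|Hs]|]; eauto.
Qed.

Open Scope R_scope.

Definition sumR (U : list (list bool)) : R :=
  fold_right (fun u acc => / 2 ^ length u + acc) 0 U.

Lemma length_all_strings L : length (all_strings L) = (2 ^ L)%nat.
Proof.
  induction L as [|L IH]; [reflexivity|]. simpl. rewrite <- IH. clear IH.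
  induction (all_strings L); simpl; lia.
Qed.

Lemma count_prefix_le L u :
  (length (filter (prefixb u) (all_strings L)) * 2 ^ length u <= 2 ^ L)%nat.
Proof.
  revert u; induction L as [|L IH]; intros [|c u]; simpl; try lia.
  - rewrite filter_true. change (length (all_strings (S L)) * 1 <= 2 * 2 ^ L)%nat.
    rewrite length_all_strings. simpl. lia.
  - specialize (IH u).
    enough (Heq : forall l, length (filter (prefixb (c :: u))
        (flat_map (fun s => [false :: s; true :: s]) l)) = length (filter (prefixb u) l))
      by (rewrite Heq; lia).
    induction l as [|x l IHl]; [reflexivity|]. cbn [flat_map app filter].
    change (prefixb (c :: u) (?b :: x)) with (Bool.eqb c b && prefixb u x)%bool.
    destruct c, (prefixb u x); cbn [Bool.eqb andb filter length]; rewrite ?IHl; reflexivity.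
Qed.

Lemma count_cover_le (U : list (list bool)) l :
  (length (filter (fun t => existsb (fun u => prefixb u t) U) l) <=
   fold_right (fun u acc => length (filter (prefixb u) l) + acc) 0 U)%nat.
Proof.
  induction U as [|u U IH]; simpl.
  - induction l; simpl; lia.
  - enough (length (filter (fun t => prefixb u t || existsb (fun u0 => prefixb u0 t) U)%bool l)
      <= length (filter (prefixb u) l)
         + length (filter (fun t => existsb (fun u0 => prefixb u0 t) U) l))%nat by lia.
    clear IH. induction l as [|t l IHl]; simpl; [lia|].
    destruct (prefixb u t), (existsb _ U); simpl; lia.
Qed.

Lemma filter_length_mono {A} (p p' : A -> bool) l :
  (forall x, p x = true -> p' x = true) -> (length (filter p l) <= length (filter p' l))%nat.
Proof.
  intros Himp. induction l as [|x l IH]; simpl; [lia|].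
  destruct (p x) eqn:E; [rewrite (Himp x E)|destruct (p' x)]; simpl; lia.
Qed.

Lemma measure_fin_le_sumR S U : incl S U -> measure_fin S <= sumR U.
Proof.
  intros HSU. unfold measure_fin.
  set (L := fold_right (fun s m => Nat.max (length s) m) 0%nat S).
  assert (H2L : 0 < 2 ^ L) by (apply pow_lt; lra).
  apply Rle_trans with
    (INR (fold_right (fun u acc => length (filter (prefixb u) (all_strings L)) + acc)
            0 U)%nat / 2 ^ L).
  - apply Rmult_le_compat_r; [left; now apply Rinv_0_lt_compat|].
    apply le_INR. eapply Nat.le_trans; [|apply count_cover_le].
    apply filter_length_mono. intros t Ht.
    apply existsb_exists in Ht as [s [Hs Hst]]. apply existsb_exists. eauto.
  - clear HSU. induction U as [|u U IH]; simpl; [unfold Rdiv; lra|].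
    rewrite plus_INR. unfold Rdiv in *. rewrite Rmult_plus_distr_r.
    apply Rplus_le_compat; [|exact IH].
    assert (H2u : 0 < 2 ^ length u) by (apply pow_lt; lra).
    pose proof (le_INR _ _ (count_prefix_le L u)) as Hcount.
    rewrite mult_INR, !pow_INR in Hcount. simpl INR in Hcount.
    apply (Rmult_le_reg_r (2 ^ L * 2 ^ length u)); [nra|].
    replace (/ 2 ^ length u * (2 ^ L * 2 ^ length u)) with (2 ^ L) by (field; lra).
    replace (INR (length (filter (prefixb u) (all_strings L))) * / 2 ^ L
      * (2 ^ L * 2 ^ length u))
      with (INR (length (filter (prefixb u) (all_strings L))) * 2 ^ length u)
      by (field; lra).
    exact Hcount.
Qed.

Lemma measure_V_le_cover g n U :
  (forall j s, decode_str (g n j) = Some s -> In s U) -> measure_V_le g n (sumR U).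
Proof.
  intros Hcover k. apply measure_fin_le_sumR. intros s Hs.
  destruct (In_stage _ _ _ _ Hs) as [j Hj]. eauto.
Qed.

Fixpoint econst (c : nat) : expr :=
  match c with 0%nat => EZero | S c' => ESucc (econst c') end.

Lemma econst_val c v : expr_val (econst c) v = c.
Proof. induction c; simpl; auto. Qed.

Lemma econst_wf c k : expr_wf k (econst c) = true.
Proof. induction c; simpl; auto. Qed.

(* Otherwise the cylinders of [X_0 ... X_(N-1) b^n] form an ML test capturing [X]. *)
Lemma ML_random_not_eventually_const X :
  ML_random X -> forall N b, exists i, (N <= i)%nat /\ X i <> b.
Proof.
  intros HML N b. apply Classical_Prop.NNPP. intros Hconst.
  assert (Hb : forall i, (N <= i)%nat -> X i = b).
  { intros i Hi. destruct (Bool.bool_dec (X i) b); [auto | exfalso; eauto]. }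
  set (P := map X (seq 0 N)).
  assert (HP : length P = N) by (unfold P; now rewrite length_map, length_seq).
  set (E := ERec (EVar 0) (econst (enc P))
              (EApp2 ADD (EApp2 ADD (EVar 1) (EVar 1)) (econst (Nat.b2n b)))).
  assert (HE : forall n k, expr_val E [n; k] = enc (P ++ repeat b n)).
  { intros n k. apply (ERec_val_ind (fun i acc => acc = enc (P ++ repeat b i))).
    - now rewrite econst_val, app_nil_r.
    - intros i acc ->. cbn -[ADD econst]. rewrite !ADD_val, econst_val.
      rewrite repeat_cons, app_assoc, enc_snoc. lia. }
  apply (HML (fun n k => expr_val E [n; k])); [split|].
  - apply expr_computable2. simpl. now rewrite !econst_wf.
  - intros n k. eapply Rle_trans.
    + apply (measure_V_le_cover _ n [P ++ repeat b n]).
      intros j s. rewrite HE, decode_enc. injection 1 as <-. now left.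
    + simpl. rewrite Rplus_0_r, length_app, repeat_length.
      apply Rinv_le_contravar; [apply pow_lt; lra|]. apply Rle_pow; [lra|lia].
  - intros n. exists 0%nat. rewrite HE, decode_enc. intros i Hi.
    rewrite length_app, repeat_length in Hi.
    destruct (Nat.lt_ge_cases i N).
    + rewrite app_nth1 by lia. unfold P.
      rewrite nth_indep with (d' := X 0%nat) by (rewrite length_map, length_seq; lia).
      now rewrite map_nth, seq_nth.
    + rewrite app_nth2, nth_repeat_lt by lia. auto.
Qed.

(* [dyadic_scale d K] says that [K] is [⌊-log₂ d⌋] truncated at [0]. *)
Definition dyadic_scale (d : R) (K : nat) : Prop :=
  (K = 0%nat \/ d * 2 ^ K <= 1) /\ 1 < d * 2 ^ S K.

Lemma dyadic_scale_le d d' K k :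
  dyadic_scale d' K -> d <= d' -> 1 < d * 2 ^ S k -> (K <= k)%nat.
Proof.
  intros [[HK0|HK] _] Hdd' Hk; [lia|].
  destruct (Nat.le_gt_cases K k) as [|Hlt]; [assumption|exfalso].
  assert (2 ^ S k <= 2 ^ K) by (apply Rle_pow; [lra|lia]).
  assert (0 < 2 ^ S k) by (apply pow_lt; lra).
  assert (d * 2 ^ S k <= d' * 2 ^ K) by (apply Rmult_le_compat; nra).
  lra.
Qed.

Lemma ln_le_0_iff y : 0 < y -> ln y <= 0 <-> y <= 1.
Proof.
  intros Hy. rewrite <- ln_1. split; intros H.
  - destruct (Rle_lt_dec y 1); [assumption|].
    pose proof (ln_increasing 1 y ltac:(lra) r). lra.
  - destruct H as [H| ->]; [left; now apply ln_increasing | lra].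
Qed.

Lemma kfun_dyadic_scale d :
  0 < d -> dyadic_scale d (Z.to_nat (Int_part (- (ln d / ln 2)))).
Proof.
  intros Hd. assert (Hln2 : 0 < ln 2) by (pose proof ln_lt_2; lra).
  set (x := - (ln d / ln 2)). destruct (base_Int_part x) as [Hlo Hhi].
  set (z := Int_part x) in *.
  assert (Hx : forall m : nat, d * 2 ^ m <= 1 <-> INR m <= x).
  { intros m. rewrite <- ln_le_0_iff by (apply Rmult_lt_0_compat; [lra|apply pow_lt; lra]).
    rewrite ln_mult, ln_pow by (try apply pow_lt; lra). unfold x.
    split; intros H.
    - apply (Rmult_le_reg_r (ln 2)); [lra|]. unfold Rdiv. field_simplify; lra.
    - apply (Rmult_le_compat_r (ln 2)) in H; [|lra]. unfold Rdiv in H.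
      field_simplify in H; lra. }
  split.
  - destruct (Z_lt_le_dec z 1); [left; lia|right].
    apply Hx. rewrite INR_IZR_INZ, Z2Nat.id by lia. assumption.
  - destruct (Rlt_le_dec 1 (d * 2 ^ S (Z.to_nat z))) as [|Hle]; [assumption|exfalso].
    apply Hx in Hle. rewrite S_INR in Hle.
    destruct (Z_lt_le_dec z 0).
    + replace (Z.to_nat z) with 0%nat in Hle by lia. simpl in Hle.
      assert (IZR z <= -1) by (apply IZR_le; lia). lra.
    + rewrite INR_IZR_INZ, Z2Nat.id in Hle by lia. lra.
Qed.

Fixpoint psum (h : nat -> R) (m : nat) : R :=
  match m with 0%nat => 0 | S m' => psum h m' + h m' end.

Lemma psum_mono h m t : (forall i, 0 <= h i) -> psum h m <= psum h (m + t).
Proof.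
  intros Hh. induction t; rewrite ?Nat.add_succ_r; simpl; [rewrite Nat.add_0_r|]; 
    [lra | specialize (Hh (m + t)%nat); lra].
Qed.

Lemma psum_ge_term h K j t : (forall i, 0 <= h i) -> (K <= j < K + t)%nat ->
  psum h K + h j <= psum h (K + t).
Proof.
  intros Hh Hj.
  pose proof (psum_mono h K (j - K) Hh) as H1.
  pose proof (psum_mono h (S j) (K + t - S j) Hh) as H2.
  replace (K + (j - K))%nat with j in H1 by lia.
  replace (S j + (K + t - S j))%nat with (K + t)%nat in H2 by lia.
  simpl in H2. lra.
Qed.

Lemma psum_geom K t :
  psum (fun i => / 2 ^ S i) (K + t) - psum (fun i => / 2 ^ S i) K = / 2 ^ K - / 2 ^ (K + t).
Proof.
  induction t; [rewrite Nat.add_0_r; lra|].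
  rewrite Nat.add_succ_r. cbn [psum].
  assert (0 < 2 ^ (K + t)) by (apply pow_lt; lra).
  replace (/ 2 ^ S (K + t)) with (/ 2 ^ (K + t) / 2) by (simpl; field; lra). lra.
Qed.

Lemma psum_minus h1 h2 m : psum (fun i => h1 i - h2 i) m = psum h1 m - psum h2 m.
Proof. induction m; simpl; lra. Qed.

Lemma Un_cv_le_eventually u l c N : Un_cv u l -> (forall n, (N <= n)%nat -> u n <= c) -> l <= c.
Proof.
  intros Hu Hc. destruct (Rlt_le_dec c l); [exfalso|assumption].
  destruct (Hu (l - c) ltac:(lra)) as [N1 HN1].
  specialize (HN1 (Nat.max N N1) ltac:(lia)). specialize (Hc (Nat.max N N1) ltac:(lia)).
  apply Rabs_def2 in HN1. lra.
Qed.

Section PrefixNum.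
Variables (X : nat -> bool) (r : R).
Hypotheses (Hr : real_of_bits X r) (HX : forall N b, exists i, (N <= i)%nat /\ X i <> b).

Let w i := if X i then / 2 ^ S i else 0.

Lemma psum_prefix_num K : psum w K = INR (prefix_num X K) / 2 ^ K.
Proof.
  induction K; cbn [psum prefix_num]; [simpl; lra|].
  rewrite IHK. unfold w. rewrite plus_INR, mult_INR.
  assert (0 < 2 ^ K) by (apply pow_lt; lra).
  destruct (X K); simpl; field; lra.
Qed.

Lemma prefix_num_bounds K :
  INR (prefix_num X K) / 2 ^ K < r < (INR (prefix_num X K) + 1) / 2 ^ K.
Proof.
  assert (Hw : forall i, 0 <= w i).
  { intros i. unfold w. destruct (X i); [left; apply Rinv_0_lt_compat, pow_lt|]; lra. }
  assert (Hsum : forall n, sum_f_R0 w n = psum w (S n)).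
  { induction n; simpl in *; [lra|]. now rewrite IHn. }
  replace ((INR (prefix_num X K) + 1) / 2 ^ K) with (psum w K + / 2 ^ K)
    by (rewrite psum_prefix_num; field; apply pow_nonzero; lra).
  rewrite <- psum_prefix_num. split.
  - destruct (HX K false) as [j [HKj Hj]]. apply Bool.not_false_is_true in Hj.
    pose proof (psum_ge_term w K j (S j - K) Hw ltac:(lia)) as Hj'.
    replace (K + (S j - K))%nat with (S j) in Hj' by lia.
    pose proof (sum_incr w j r Hr Hw). rewrite Hsum in *.
    assert (0 < w j) by (unfold w; rewrite Hj; apply Rinv_0_lt_compat, pow_lt; lra).
    lra.
  - destruct (HX K true) as [j [HKj Hj]]. apply Bool.not_true_is_false in Hj.
    set (h i := / 2 ^ S i - w i).
    assert (Hh : forall i, 0 <= h i).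
    { intros i. unfold h, w. assert (0 < / 2 ^ S i) by (apply Rinv_0_lt_compat, pow_lt; lra).
      destruct (X i); lra. }
    assert (Hwj : w j = 0) by (unfold w; now rewrite Hj).
    assert (0 < / 2 ^ S j) by (apply Rinv_0_lt_compat, pow_lt; lra).
    apply Rle_lt_trans with (psum w K + / 2 ^ K - / 2 ^ S j); [|lra].
    apply (Un_cv_le_eventually _ _ _ j Hr). intros n Hn. rewrite Hsum.
    pose proof (psum_ge_term h K j (S n - K) Hh ltac:(lia)) as Hge.
    pose proof (psum_geom K (S n - K)) as Hgeom.
    replace (K + (S n - K))%nat with (S n) in Hge, Hgeom by lia.
    unfold h in Hge. rewrite !psum_minus in Hge.
    assert (0 < / 2 ^ S n) by (apply Rinv_0_lt_compat, pow_lt; lra).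
    lra.
Qed.

End PrefixNum.

Lemma nat_floor_le u v x y :
  INR u <= x -> y < INR v + 1 -> x <= y -> (u <= v)%nat.
Proof.
  intros Hu Hv Hxy. assert (Huv : INR u < INR (S v)) by (rewrite S_INR; lra).
  apply INR_lt in Huv. lia.
Qed.

Lemma INR_div_floor M D : (0 < D)%nat ->
  INR (M / D) <= INR M / INR D < INR (M / D) + 1.
Proof.
  intros HD. pose proof (Nat.div_mod_eq M D) as Hdiv.
  pose proof (lt_INR _ _ (Nat.mod_upper_bound M D ltac:(lia))) as Hmod.
  pose proof (pos_INR (M mod D)). assert (0 < INR D) by (apply lt_0_INR; lia).
  apply (f_equal INR) in Hdiv. rewrite plus_INR, mult_INR in Hdiv.
  unfold Rdiv. rewrite Hdiv. split.
  - apply (Rmult_le_reg_r (INR D)); [lra|]. rewrite Rmult_assoc, Rinv_l by lra. nra.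
  - apply (Rmult_lt_reg_r (INR D)); [lra|]. rewrite Rmult_assoc, Rinv_l by lra. nra.
Qed.

Lemma INR_sub_Rmax x y : INR (x - y) = Rmax 0 (INR x - INR y).
Proof.
  destruct (Nat.le_gt_cases y x) as [Hle|Hlt].
  - rewrite minus_INR by assumption. apply le_INR in Hle. rewrite Rmax_right; lra.
  - replace (x - y)%nat with 0%nat by lia. apply lt_INR in Hlt.
    rewrite Rmax_left; simpl; lra.
Qed.

Lemma Un_cv_eventually_gt u l e N : Un_cv u l -> e < l -> exists s, (N <= s)%nat /\ e < u s.
Proof.
  intros Hu He. destruct (Hu (l - e) ltac:(lra)) as [N1 HN1].
  exists (Nat.max N N1). split; [lia|].
  specialize (HN1 (Nat.max N N1) ltac:(lia)). apply Rabs_def2 in HN1. lra.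
Qed.

Lemma length_le_max_length (S : list (list bool)) s :
  In s S -> (length s <= fold_right (fun s m => Nat.max (length s) m) 0 S)%nat.
Proof.
  induction S as [|t S IH]; simpl; [tauto|]. intros [<-|Hs]; [|apply IH in Hs]; lia.
Qed.

Lemma sumR_two_per_length (tau : nat -> nat -> list bool) m0 len :
  (forall m e, length (tau m e) = m) ->
  sumR (flat_map (fun m => [tau m 0%nat; tau m 1%nat]) (seq m0 len)) <= 4 * / 2 ^ m0.
Proof.
  intros Htau. revert m0; induction len as [|len IH]; intros m0; simpl.
  - assert (0 < / 2 ^ m0) by (apply Rinv_0_lt_compat, pow_lt; lra). lra.
  - unfold sumR in *. simpl. rewrite !Htau.
    specialize (IH (S m0)). simpl in IH. rewrite Rinv_mult in IH. lra.
Qed.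

Section ApproximationTest.
Variables (a b c : nat -> nat) (Rs : nat -> bool).

Definition den (s : nat) : nat := S (c s).

(* [q s - q n = (num_hi n s - num_lo n s) / (den s * den n)] with both numerators in [nat]. *)
Definition num_hi (n s : nat) : nat := a s * den n + b n * den s.
Definition num_lo (n s : nat) : nat := a n * den s + b s * den n.

Definition later_above (n s : nat) : bool := (n <? s) && (num_lo n s <? num_hi n s).

Definition scale (n s : nat) : nat := Nat.log2 (den s * den n / (num_hi n s - num_lo n s)).

Definition dyadic_floor (s K : nat) : nat := (a s - b s) * 2 ^ K / den s.

Definition test_code (n s : nat) : nat :=
  if later_above n s then enc (rbits Rs (scale n s) (dyadic_floor s (scale n s))) else 0.

Variable q : nat -> R.
Hypothesis q_def : forall s, q s = (INR (a s) - INR (b s)) / INR (den s).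

Lemma INR_den_pos s : 0 < INR (den s).
Proof. apply lt_0_INR. unfold den. lia. Qed.

Lemma num_lt_iff n s : (num_lo n s < num_hi n s)%nat <-> q n < q s.
Proof.
  rewrite !q_def. unfold num_lo, num_hi.
  pose proof (INR_den_pos n) as Hn. pose proof (INR_den_pos s) as Hs.
  split; intros Hlt.
  - apply lt_INR in Hlt. rewrite !plus_INR, !mult_INR in Hlt.
    apply (Rmult_lt_reg_r (INR (den n) * INR (den s))); [nra|].
    unfold Rdiv. field_simplify; lra.
  - apply INR_lt. rewrite !plus_INR, !mult_INR.
    apply (Rmult_lt_compat_r (INR (den n) * INR (den s))) in Hlt; [|nra].
    unfold Rdiv in Hlt. field_simplify in Hlt; lra.
Qed.

Lemma later_above_iff n s : later_above n s = true <-> (n < s)%nat /\ q n < q s.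
Proof. unfold later_above. rewrite Bool.andb_true_iff, !Nat.ltb_lt, num_lt_iff. tauto. Qed.

Lemma scale_dyadic n s : later_above n s = true -> dyadic_scale (q s - q n) (scale n s).
Proof.
  intros Hact. apply later_above_iff, proj2, num_lt_iff in Hact.
  set (P := (num_hi n s - num_lo n s)%nat). set (Q := (den s * den n)%nat).
  assert (Hgap : q s - q n = INR P / INR Q).
  { unfold P, Q. rewrite minus_INR by lia. rewrite !q_def. unfold num_hi, num_lo.
    pose proof (INR_den_pos n). pose proof (INR_den_pos s).
    rewrite !plus_INR, !mult_INR. field. lra. }
  assert (HQ : 0 < INR Q) by (unfold Q; rewrite mult_INR; pose proof (INR_den_pos n);
    pose proof (INR_den_pos s); nra).
  destruct (log2_div_spec P Q ltac:(unfold P; lia)) as [Hlo Hhi].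
  unfold scale. fold P Q. set (K := Nat.log2 (Q / P)) in *.
  rewrite Hgap. unfold Rdiv. split.
  - destruct Hlo as [|Hlo]; [now left|right].
    apply le_INR in Hlo. rewrite mult_INR, pow_INR in Hlo. replace (INR 2) with 2 in Hlo by (simpl; lra).
    apply (Rmult_le_reg_r (INR Q)); [lra|].
    replace (INR P * / INR Q * 2 ^ K * INR Q) with (INR P * 2 ^ K) by (field; lra). lra.
  - apply lt_INR in Hhi. rewrite mult_INR, pow_INR in Hhi. replace (INR 2) with 2 in Hhi by (simpl; lra).
    apply (Rmult_lt_reg_r (INR Q)); [lra|].
    replace (INR P * / INR Q * 2 ^ S K * INR Q) with (INR P * 2 ^ S K) by (field; lra). lra.
Qed.

Lemma Rmax0_div x d : 0 < d -> Rmax 0 (x / d) = Rmax 0 x / d.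
Proof.
  intros Hd. unfold Rdiv. rewrite !(Rmult_comm _ (/ d)).
  rewrite <- (Rmult_0_r (/ d)) at 1. rewrite RmaxRmult; [ring|].
  left. now apply Rinv_0_lt_compat.
Qed.

Lemma dyadic_floor_spec s K :
  INR (dyadic_floor s K) <= Rmax 0 (q s) * 2 ^ K < INR (dyadic_floor s K) + 1.
Proof.
  replace (Rmax 0 (q s) * 2 ^ K) with (INR ((a s - b s) * 2 ^ K) / INR (den s)).
  - apply INR_div_floor. unfold den. lia.
  - rewrite q_def, Rmax0_div by apply INR_den_pos.
    rewrite mult_INR, pow_INR, INR_sub_Rmax. replace (INR 2) with 2 by (simpl; lra).
    field. apply Rgt_not_eq, INR_den_pos.
Qed.

Lemma dyadic_floor_eq s K V :
  INR V / 2 ^ K <= q s < (INR V + 1) / 2 ^ K -> dyadic_floor s K = V.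
Proof.
  intros [Hlo Hhi]. assert (H2K : 0 < / 2 ^ K) by (apply Rinv_0_lt_compat, pow_lt; lra).
  assert (HqV : INR V <= q s * 2 ^ K < INR V + 1).
  { unfold Rdiv in *. split;
      [apply (Rmult_le_reg_r (/ 2 ^ K)) | apply (Rmult_lt_reg_r (/ 2 ^ K))]; try lra;
      rewrite Rmult_assoc, Rinv_r by (apply pow_nonzero; lra); lra. }
  assert (Hpos : 0 <= q s).
  { apply Rle_trans with (INR V / 2 ^ K); [|assumption].
    apply Rmult_le_pos; [apply pos_INR | lra]. }
  destruct (dyadic_floor_spec s K) as [F1 F2]. rewrite Rmax_right in F1, F2 by assumption.
  apply Nat.le_antisymm; eapply nat_floor_le; try apply Rle_refl; lra.
Qed.

Lemma dyadic_floor_div s K t : (dyadic_floor s (K + t) / 2 ^ t)%nat = dyadic_floor s K.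
Proof.
  unfold dyadic_floor. rewrite Nat.Div0.div_div, Nat.pow_add_r, Nat.mul_assoc.
  apply Nat.Div0.div_mul_cancel_r. apply Nat.pow_nonzero. lia.
Qed.

Lemma decode_test_code n s σ : decode_str (test_code n s) = Some σ ->
  later_above n s = true /\ σ = rbits Rs (scale n s) (dyadic_floor s (scale n s)).
Proof.
  unfold test_code. destruct (later_above n s); [|discriminate].
  rewrite decode_enc. now injection 1.
Qed.

Lemma test_code_nested : (forall s, q s <= q (S s)) -> nested test_code.
Proof.
  intros Hmono n X [s Hs]. exists s.
  destruct (decode_str (test_code (S n) s)) as [σ|] eqn:E; [|destruct Hs].
  apply decode_test_code in E as [Hact' ->].
  pose proof (proj1 (later_above_iff _ _) Hact') as [Hns Hq'].
  assert (Hact : later_above n s = true).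
  { apply later_above_iff. specialize (Hmono n). split; [lia|lra]. }
  assert (HK : (scale n s <= scale (S n) s)%nat).
  { apply (dyadic_scale_le (q s - q (S n)) (q s - q n)); [now apply scale_dyadic| |].
    - specialize (Hmono n). lra.
    - apply scale_dyadic; assumption. }
  unfold test_code. rewrite Hact, decode_enc.
  replace (scale (S n) s) with (scale n s + (scale (S n) s - scale n s))%nat in Hs by lia.
  destruct (rbits_add Rs (scale n s) (scale (S n) s - scale n s)
              (dyadic_floor s (scale n s + (scale (S n) s - scale n s)))) as [rest Hrest].
  rewrite Hrest, dyadic_floor_div in Hs.
  intros i Hi. rewrite Hs by (rewrite length_app; lia). now apply app_nth1.
Qed.

(* The code strings of [V_n] with [R]-length [m] are determined up to [1] in the
   last place by [q n]: the string is read at the first [J] with [|R ∩ J| = m], and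
   [q s - q n <= 2^-J] forces [⌊q s 2^J⌋ - ⌊q n 2^J⌋ <= 1]. *)
Lemma test_string_shape n s : infinite_set Rs -> later_above n s = true ->
  let J := first_cnt Rs (cnt Rs (scale n s)) in
  exists e, (e <= 1)%nat /\
    rbits Rs (scale n s) (dyadic_floor s (scale n s)) = rbits Rs J (dyadic_floor n J + e).
Proof.
  intros Hinf Hact J.
  destruct (first_cnt_spec Rs Hinf (cnt Rs (scale n s))) as [HJcnt HJmin]. fold J in HJcnt, HJmin.
  specialize (HJmin _ eq_refl).
  replace (scale n s) with (J + (scale n s - J))%nat by lia.
  rewrite rbits_add_cnt, dyadic_floor_div
    by (replace (J + (scale n s - J))%nat with (scale n s) by lia; auto).
  destruct (Nat.eq_dec J 0) as [HJ0|HJ0]; [exists 0%nat; rewrite HJ0; split; [lia|reflexivity]|].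
  destruct (scale_dyadic n s Hact) as [[|Hscale] _]; [lia|].
  pose proof (proj2 (proj1 (later_above_iff n s) Hact)) as Hqns.
  assert (Hgap : (q s - q n) * 2 ^ J <= 1).
  { eapply Rle_trans; [|apply Hscale]. apply Rmult_le_compat_l; [lra|].
    apply Rle_pow; [lra|lia]. }
  assert (H2J : 0 < 2 ^ J) by (apply pow_lt; lra).
  assert (Hmax : 0 <= Rmax 0 (q s) - Rmax 0 (q n) <= q s - q n)
    by (unfold Rmax; destruct (Rle_dec 0 (q n)), (Rle_dec 0 (q s)); lra).
  destruct (dyadic_floor_spec s J) as [Hs1 Hs2], (dyadic_floor_spec n J) as [Hn1 Hn2].
  assert (Hlo : (dyadic_floor n J <= dyadic_floor s J)%nat).
  { apply (nat_floor_le _ _ (Rmax 0 (q n) * 2 ^ J) (Rmax 0 (q s) * 2 ^ J)); try lra.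
    apply Rmult_le_compat_r; lra. }
  assert (Hhi : (dyadic_floor s J <= S (dyadic_floor n J))%nat).
  { apply (nat_floor_le _ _ (Rmax 0 (q s) * 2 ^ J) (Rmax 0 (q n) * 2 ^ J + 1));
      [lra | rewrite S_INR; lra |].
    assert ((Rmax 0 (q s) - Rmax 0 (q n)) * 2 ^ J <= (q s - q n) * 2 ^ J)
      by (apply Rmult_le_compat_r; lra). lra. }
  exists (dyadic_floor s J - dyadic_floor n J)%nat. split; [lia|]. f_equal. lia.
Qed.

Lemma test_code_measure r n : infinite_set Rs -> (forall s, q s <= r) -> q n < r ->
  measure_V_le test_code n
    (4 * / 2 ^ cnt Rs (Z.to_nat (Int_part (- (ln (r - q n) / ln 2))))).
Proof.
  intros Hinf Hr Hn k.
  set (K0 := Z.to_nat _). pose proof (kfun_dyadic_scale (r - q n) ltac:(lra)) as HK0.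
  fold K0 in HK0.
  set (L := fold_right (fun s m => Nat.max (length s) m) 0%nat (stage test_code n k)).
  set (tau m e := rbits Rs (first_cnt Rs m) (dyadic_floor n (first_cnt Rs m) + e)).
  assert (Htau : forall m e, length (tau m e) = m).
  { intros m e. unfold tau. rewrite rbits_length. apply first_cnt_spec, Hinf. }
  eapply Rle_trans; [|apply (sumR_two_per_length tau (cnt Rs K0) (S L - cnt Rs K0) Htau)].
  apply measure_fin_le_sumR. intros σ Hσ.
  pose proof (length_le_max_length _ _ Hσ) as HL. fold L in HL.
  destruct (In_stage _ _ _ _ Hσ) as [s Hs]. apply decode_test_code in Hs as [Hact ->].
  rewrite rbits_length in HL.
  assert (HK0s : (K0 <= scale n s)%nat).
  { apply (dyadic_scale_le (q s - q n) (r - q n)); [assumption | specialize (Hr s); lra |].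
    apply scale_dyadic, Hact. }
  apply in_flat_map. exists (cnt Rs (scale n s)). split.
  - apply in_seq. pose proof (cnt_mono Rs _ _ HK0s). lia.
  - destruct (test_string_shape n s Hinf Hact) as [e [He ->]].
    destruct e as [|[|e]]; [now left | right; now left | lia].
Qed.

(* For [s] large, [q s] lies in the same dyadic interval of length [2^-k(n)] as [Ω]
   and [q s - q n] has the same scale [k(n)] as [Ω - q n]. *)
Lemma test_code_captures X r n :
  real_of_bits X r -> (forall N b, exists i, (N <= i)%nat /\ X i <> b) ->
  (forall s, q s <= r) -> q n < r -> Un_cv q r -> in_V test_code n (restrict_seq Rs X).
Proof.
  intros Hbits HX Hr Hn Hcv.
  set (K := Z.to_nat (Int_part (- (ln (r - q n) / ln 2)))).
  pose proof (kfun_dyadic_scale (r - q n) ltac:(lra)) as HK. fold K in HK.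
  set (V := prefix_num X K).
  destruct (prefix_num_bounds X r Hbits HX K) as [HV1 HV2]. fold V in HV1, HV2.
  set (e := Rmax (q n + / 2 ^ S K) (INR V / 2 ^ K)).
  assert (Her : e < r).
  { apply Rmax_lub_lt; [|assumption]. destruct HK as [_ HK].
    apply (Rmult_lt_reg_r (2 ^ S K)); [apply pow_lt; lra|].
    rewrite Rmult_plus_distr_r, Rinv_l by (apply pow_nonzero; lra). lra. }
  destruct (Un_cv_eventually_gt q r e (S n) Hcv Her) as [s [Hns Hes]].
  pose proof (Rmax_l (q n + / 2 ^ S K) (INR V / 2 ^ K)) as He1.
  pose proof (Rmax_r (q n + / 2 ^ S K) (INR V / 2 ^ K)) as He2.
  fold e in He1, He2.
  assert (Hact : later_above n s = true).
  { apply later_above_iff. split; [lia|].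
    assert (0 < / 2 ^ S K) by (apply Rinv_0_lt_compat, pow_lt; lra). lra. }
  assert (Hscale : scale n s = K).
  { apply Nat.le_antisymm.
    - apply (dyadic_scale_le (q s - q n) (q s - q n)); [now apply scale_dyadic | lra |].
      apply (Rmult_lt_reg_r (/ 2 ^ S K)); [apply Rinv_0_lt_compat, pow_lt; lra|].
      rewrite Rmult_assoc, Rinv_r by (apply pow_nonzero; lra). lra.
    - apply (dyadic_scale_le (q s - q n) (r - q n)); [assumption | specialize (Hr s); lra |].
      apply scale_dyadic, Hact. }
  assert (Hfloor : dyadic_floor s K = V)
    by (apply dyadic_floor_eq; specialize (Hr s); lra).
  exists s. unfold test_code. rewrite Hact, decode_enc, Hscale, Hfloor.
  intros i Hi. unfold restrict_seq. symmetry. now apply rbits_prefix_num.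
Qed.

End ApproximationTest.


Opaque ADD SUB MUL POW2 LE ODD DIV KC RBITS.

Section TestComputable.
Variables (pa pb pc pr : prog) (a b c : nat -> nat) (Rs : nat -> bool).
Hypotheses (Ha : forall n, eval pa [n] (a n)) (Hb : forall n, eval pb [n] (b n))
  (Hc : forall n, eval pc [n] (c n)) (Hr : forall n, eval pr [n] (if Rs n then 1 else 0)).

Definition TEST : expr :=
  let a_n := EExt pa a Ha (EVar 0) in let a_s := EExt pa a Ha (EVar 1) in
  let b_n := EExt pb b Hb (EVar 0) in let b_s := EExt pb b Hb (EVar 1) in
  let den_n := ESucc (EExt pc c Hc (EVar 0)) in let den_s := ESucc (EExt pc c Hc (EVar 1)) in
  let hi := EApp2 ADD (EApp2 MUL a_s den_n) (EApp2 MUL b_n den_s) in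
  let lo := EApp2 ADD (EApp2 MUL a_n den_s) (EApp2 MUL b_s den_n) in
  let K := EApp2 KC (EApp2 SUB hi lo) (EApp2 MUL den_s den_n) in
  let floor := EApp2 DIV (EApp2 MUL (EApp2 SUB a_s b_s) (EApp1 POW2 K)) den_s in
  let active := EApp2 MUL (EApp2 LE (ESucc (EVar 0)) (EVar 1)) (EApp2 LE (ESucc lo) hi) in
  EApp2 MUL active (EApp2 (RBITS Rs pr Hr) K floor).

Lemma TEST_val n s : expr_val TEST [n; s] = test_code a b c Rs n s.
Proof.
  unfold TEST, test_code, later_above, scale, dyadic_floor, num_hi, num_lo, den, Nat.ltb.
  cbn [expr_val nth]. rewrite !MUL_val, !LE_val, !ADD_val, !SUB_val.
  destruct (S n <=? s), (S _ <=? _) eqn:Hact; cbn [andb];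
    rewrite ?Nat.mul_0_l, ?Nat.mul_0_r, ?Nat.mul_1_l; [|reflexivity..].
  apply Nat.leb_le in Hact.
  rewrite KC_val, RBITS_val, DIV_val, POW2_val by lia. reflexivity.
Qed.

Lemma test_code_computable : computable2 (test_code a b c Rs).
Proof.
  destruct (expr_computable2 TEST eq_refl) as [p Hp].
  exists p. intros n s. rewrite <- TEST_val. apply Hp.
Qed.

End TestComputable.

Lemma full_test_bounded cb :
  (exists C, forall n, 1 <= C * cb n) -> bounded_test cb (fun _ _ => enc []).
Proof.
  intros [C HC]. split; [|split].
  - destruct (expr_computable2 (econst (enc [])) (econst_wf _ _)) as [p Hp].
    exists p. intros n m. rewrite <- (econst_val (enc []) [n; m]). apply Hp.
  - intros n X HX. exact HX.
  - exists C. intros n k. eapply Rle_trans.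
    + apply (measure_V_le_cover _ n [[]]). intros j s. rewrite decode_enc.
      injection 1 as <-. now left.
    + specialize (HC n). simpl. lra.
Qed.

Lemma full_test_captures X : captures (fun _ _ => enc []) X.
Proof. intros n. exists 0%nat. rewrite decode_enc. intros i Hi. simpl in Hi. lia. Qed.

Lemma eventually_const_bounded_below (f : nat -> R) s0 :
  (forall n, 0 < f n) -> (forall n, (s0 <= n)%nat -> f n = f s0) ->
  exists C, forall n, 1 <= C * f n.
Proof.
  intros Hpos Hconst. exists (psum (fun i => / f i) (S s0)). intros n.
  set (n' := Nat.min n s0).
  assert (Hn' : f n = f n').
  { destruct (Nat.le_ge_cases n s0); unfold n'; [now rewrite Nat.min_l | ].
    rewrite Nat.min_r, Hconst; auto. }
  assert (Hinv : forall i, 0 <= / f i) by (intros i; left; apply Rinv_0_lt_compat, Hpos).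
  rewrite Hn'. specialize (Hpos n').
  pose proof (psum_ge_term (fun i => / f i) 0 n' (S s0) Hinv ltac:(unfold n'; lia)) as Hge.
  rewrite Nat.add_0_l in Hge. change (psum _ 0) with 0 in Hge. rewrite Rplus_0_l in Hge.
  apply (Rmult_le_compat_r (f n')) in Hge; [|lra]. rewrite Rinv_l in Hge by lra. lra.
Qed.

Theorem proposition5p4 :
  forall (Omega : nat -> bool) (r : R) (q : nat -> R),
    real_of_bits Omega r ->
    ML_random Omega ->
    computable_rat_seq q ->
    (forall s, q s <= q (S s)) ->
    Un_cv q r ->
    forall Rs : nat -> bool,
      computable_set Rs -> infinite_set Rs ->
      exists g : nat -> nat -> nat,
        bounded_test (cbar Rs r q) g /\ captures g (restrict_seq Rs Omega).
Proof.
  intros X r q Hbits HML Hq Hmono Hcv Rs [pr Hr] Hinf.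
  destruct Hq as [a [b [c [[pa Ha] [[pb Hb] [[pc Hc] q_def]]]]]].
  assert (Hle : forall s, q s <= r) by now apply growing_ineq.
  destruct (Classical_Prop.classic (exists s0, q s0 = r)) as [[s0 Hs0]|Hlt].
  - exists (fun _ _ => enc []). split; [|apply full_test_captures].
    apply full_test_bounded, (eventually_const_bounded_below _ s0).
    + intros n. apply Rinv_0_lt_compat, pow_lt. lra.
    + intros n Hn. unfold cbar, kfun. replace (q n) with (q s0); [reflexivity|].
      apply Rle_antisym; [apply Rge_le, growing_prop | rewrite Hs0]; auto.
  - assert (Hlt' : forall s, q s < r).
    { intros s. destruct (Hle s); [assumption | exfalso; eauto]. }
    pose proof (ML_random_not_eventually_const X HML) as HX.
    exists (test_code a b c Rs). split; [split; [|split]|].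
    + apply (test_code_computable pa pb pc pr a b c Rs Ha Hb Hc Hr).
    + apply (test_code_nested a b c Rs q q_def Hmono).
    + exists 4. intros n. apply (test_code_measure a b c Rs q q_def r n Hinf Hle (Hlt' n)).
    + intros n. apply (test_code_captures a b c Rs q q_def X r n Hbits HX Hle (Hlt' n) Hcv).
Qed.
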